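(* Let $M\ge 3$ be an integer, let $c>0$, $f_c>0$, $d>0$, $R_D>0$, $\theta_D\in(-\pi/2,\pi/2)$, and let $\alpha\in\mathbb{R}$ with $\alpha\neq 1$. For frequency offsets $\Delta f_1,\dots,\Delta f_M$ put $\xi_m=\Delta f_m-\frac{d^2f_c}{2R_D^2}(m-1)^2$ and $$X=\frac{2\pi^2}{c^2}\sum_{m,n=1}^M\big[2(\xi_m-\xi_n)\big]^2,\quad Y=\frac{4\pi^2 d f_c\cos\theta_D}{c^2}\sum_{m,n=1}^M 2(\xi_m-\xi_n)(m-n),\quad Z=\frac{8\pi^2 f_c^2 d^2\cos^2\theta_D}{c^2}\sum_{m,n=1}^M (m-n)^2 ,$$ and let $E=\{(R,\theta)\in\mathbb{R}^2: X(R-R_D)^2+2Y(R-R_D)(\theta-\theta_D)+Z(\theta-\theta_D)^2=M^2\}$, $\Delta_R=\max_E R-\min_E R$, $\Delta_\theta=\max_E\theta-\min_E\theta$. Let $X_{\rm pa},Y_{\rm pa},Z_{\rm pa}$ denote the values of $X,Y,Z$ when all $\Delta f_m=0$. If $$\Delta f_m=\frac{f_c d^2}{2R_D^2}\,\alpha\,(m-1)^2\quad\text{for all } m=1,\dots,M,$$ then $E$ is an ellipse and $$\Delta_R=\frac{2}{|1-\alpha|}\sqrt{\frac{M^2Z_{\rm pa}}{X_{\rm pa}Z_{\rm pa}-Y_{\rm pa}^2}},\qquad \Delta_\theta=2\sqrt{\frac{M^2X_{\rm pa}}{X_{\rm pa}Z_{\rm pa}-Y_{\rm pa}^2}} .$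$
   Context: Physical setting: a frequency diverse uniform linear array of $M$ antennas (spacing $d$, carrier $f_c$, offset $\Delta f_m$ at antenna $m$) focusing on a target at range $R_D$, angle $\theta_D$; $E$ models the half-power boundary of the beampattern in the (range, angle) plane and $\Delta_R,\Delta_\theta$ are the main-lobe beamwidths in range and angle. *)

From Stdlib Require Import Reals Lra.
Open Scope R_scope.

(* sumR M f = f 0 + f 1 + ... + f (M-1). Antenna index m = 1..M is encoded
   as k = m-1 in 0..M-1, so (m-1) becomes INR k and (m-n) becomes INR k - INR l. *)
Fixpoint sumR (M : nat) (f : nat -> R) : R :=
  match M with
  | O => 0
  | S M' => sumR M' f + f M'
  end.

(* xi_m = Delta f_m - d^2 f_c / (2 R_D^2) (m-1)^2 ; df k = Delta f_{k+1} *)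
Definition xi (df : nat -> R) (fc d RD : R) (k : nat) : R :=
  df k - d ^ 2 * fc / (2 * RD ^ 2) * (INR k) ^ 2.

Definition Xc (M : nat) (c : R) (x : nat -> R) : R :=
  2 * PI ^ 2 / c ^ 2 *
  sumR M (fun k => sumR M (fun l => (2 * (x k - x l)) ^ 2)).

Definition Yc (M : nat) (c d fc thD : R) (x : nat -> R) : R :=
  4 * PI ^ 2 * d * fc * cos thD / c ^ 2 *
  sumR M (fun k => sumR M (fun l => 2 * (x k - x l) * (INR k - INR l))).

Definition Zc (M : nat) (c d fc thD : R) : R :=
  8 * PI ^ 2 * fc ^ 2 * d ^ 2 * (cos thD) ^ 2 / c ^ 2 *
  sumR M (fun k => sumR M (fun l => (INR k - INR l) ^ 2)).

(* The conic  X u^2 + 2 Y u v + Z v^2 = K  (centered form) is a (real,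
   non-degenerate) ellipse iff the quadratic form is positive definite and K > 0. *)
Definition is_ellipse (X Y Z K : R) : Prop :=
  0 < X /\ 0 < X * Z - Y ^ 2 /\ 0 < K.

Definition max_minus_min (P : R -> Prop) (w : R) : Prop :=
  exists a b, P a /\ P b /\ (forall x, P x -> a <= x <= b) /\ w = b - a.

(* With the prescribed offsets every xi_m is (1 - alpha) times its phased-array
   value, so X, Y, Z scale like (1 - alpha)^2, (1 - alpha), 1 and the
   discriminant XZ - Y^2 picks up the factor (1 - alpha)^2.  Up to positive
   constants, X_pa Z_pa - Y_pa^2 is the Cauchy-Schwarz defect of the families
   2(xi_m - xi_n) and (m - n); it is positive because a quadratic in m is not
   proportional to a linear one once three antennas are present.  Finally, the
   projection of a centred ellipse X u^2 + 2Y uv + Z v^2 = K on the u-axis is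
   the interval |u| <= sqrt(KZ / (XZ - Y^2)), obtained by completing the square
   in v. *)
From Stdlib Require Import Reals Lra Lia.
Open Scope R_scope.

Lemma sumR_ext M f g :
  (forall k, (k < M)%nat -> f k = g k) -> sumR M f = sumR M g.
Proof.
  induction M as [|M IH]; intros Hfg; simpl; [reflexivity|].
  rewrite IH by (intros; apply Hfg; lia).
  rewrite Hfg by lia; reflexivity.
Qed.

Lemma sumR_scal M a f : sumR M (fun k => a * f k) = a * sumR M f.
Proof. induction M as [|M IH]; simpl; [ring|]. rewrite IH; ring. Qed.

Lemma sumR_plus M f g :
  sumR M (fun k => f k + g k) = sumR M f + sumR M g.
Proof. induction M as [|M IH]; simpl; [ring|]. rewrite IH; ring. Qed.

Lemma sumR_nonneg M f : (forall k, 0 <= f k) -> 0 <= sumR M f.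
Proof.
  intros Hf; induction M as [|M IH]; simpl; [lra|].
  specialize (Hf M); lra.
Qed.

Lemma sumR_term_le M f j :
  (forall k, 0 <= f k) -> (j < M)%nat -> f j <= sumR M f.
Proof.
  intros Hf; induction M as [|M IH]; intros Hj; [lia|]; simpl.
  destruct (Nat.eq_dec j M) as [->|Hne].
  - pose proof (sumR_nonneg M f Hf); lra.
  - specialize (IH ltac:(lia)); specialize (Hf M); lra.
Qed.

Lemma sumR_add_range M N f :
  sumR (M + N) f = sumR M f + sumR N (fun i => f (M + i)%nat).
Proof.
  induction N as [|N IH]; simpl; [rewrite Nat.add_0_r; ring|].
  rewrite Nat.add_succ_r; simpl; rewrite IH; ring.
Qed.

Lemma pair_index_decode N p q :
  (q < N)%nat -> ((p * N + q) / N = p /\ (p * N + q) mod N = q)%nat.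
Proof.
  intros Hq; split.
  - rewrite Nat.div_add_l, Nat.div_small by lia; lia.
  - rewrite Nat.add_comm, Nat.Div0.mod_add, Nat.mod_small by lia; reflexivity.
Qed.

Lemma sumR_pair M N f :
  sumR M (fun k => sumR N (fun l => f k l))
  = sumR (M * N) (fun i => f (i / N)%nat (i mod N)%nat).
Proof.
  induction M as [|M IH]; simpl; [reflexivity|].
  rewrite Nat.add_comm, sumR_add_range, IH; f_equal.
  apply sumR_ext; intros l Hl.
  destruct (pair_index_decode N M l Hl) as [-> ->]; reflexivity.
Qed.

Lemma cauchy_schwarz_strict n (a b : nat -> R) i j :
  (i < n)%nat -> (j < n)%nat -> a i * b j <> a j * b i ->
  sumR n (fun k => a k * b k) ^ 2
  < sumR n (fun k => a k ^ 2) * sumR n (fun k => b k ^ 2).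
Proof.
  intros Hi Hj Hab.
  set (SA := sumR n (fun k => a k ^ 2)).
  set (SB := sumR n (fun k => b k ^ 2)).
  set (SAB := sumR n (fun k => a k * b k)).
  set (defect := fun k => (SAB * a k - SA * b k) ^ 2).
  assert (Hdefect : sumR n defect = SA * (SA * SB - SAB ^ 2)).
  { rewrite (sumR_ext n defect
      (fun k => SAB ^ 2 * a k ^ 2 + (- 2 * SAB * SA * (a k * b k) + SA ^ 2 * b k ^ 2)))
      by (intros; unfold defect; ring).
    rewrite !sumR_plus, !sumR_scal; fold SA SB SAB; ring. }
  assert (Hsq : forall k, 0 <= defect k) by (intros; apply pow2_ge_0).
  assert (HSA : 0 < SA).
  { assert (Hai : a i ^ 2 <= SA)
      by (apply (sumR_term_le n (fun k => a k ^ 2)); [intros; apply pow2_ge_0|lia]).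
    assert (Haj : a j ^ 2 <= SA)
      by (apply (sumR_term_le n (fun k => a k ^ 2)); [intros; apply pow2_ge_0|lia]).
    destruct (Req_dec (a i) 0) as [Hai0|]; [destruct (Req_dec (a j) 0)|]; nra. }
  destruct (Rlt_or_le (SAB ^ 2) (SA * SB)) as [|Hle]; [assumption|exfalso].
  assert (Hzero : sumR n defect <= 0) by (rewrite Hdefect; nra).
  pose proof (sumR_term_le n defect i Hsq Hi).
  pose proof (sumR_term_le n defect j Hsq Hj).
  unfold defect in *.
  assert (Hbi : SA * b i = SAB * a i) by nra.
  assert (Hbj : SA * b j = SAB * a j) by nra.
  apply Hab, (Rmult_eq_reg_l SA); [|lra].
  transitivity (a i * (SA * b j)); [ring|].
  rewrite Hbj; transitivity (a j * (SA * b i)); [|ring].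
  rewrite Hbi; ring.
Qed.

Lemma cauchy_schwarz_strict_pair M N (a b : nat -> nat -> R) i j i' j' :
  (i < M)%nat -> (j < N)%nat -> (i' < M)%nat -> (j' < N)%nat ->
  a i j * b i' j' <> a i' j' * b i j ->
  sumR M (fun k => sumR N (fun l => a k l * b k l)) ^ 2
  < sumR M (fun k => sumR N (fun l => a k l ^ 2))
    * sumR M (fun k => sumR N (fun l => b k l ^ 2)).
Proof.
  intros Hi Hj Hi' Hj' Hab.
  rewrite !(sumR_pair M N).
  destruct (pair_index_decode N i j Hj) as [Hdi Hmi],
    (pair_index_decode N i' j' Hj') as [Hdi' Hmi'].
  apply (cauchy_schwarz_strict _ (fun p => a (p / N) (p mod N))%nat
           (fun p => b (p / N) (p mod N))%nat (i * N + j) (i' * N + j'));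
    [nia|nia|].
  rewrite Hdi, Hmi, Hdi', Hmi'; exact Hab.
Qed.

Lemma gram_defect_quadratic_pos M kappa (x : nat -> R) :
  (3 <= M)%nat -> kappa <> 0 -> (forall k, x k = kappa * INR k ^ 2) ->
  sumR M (fun k => sumR M (fun l => 2 * (x k - x l) * (INR k - INR l))) ^ 2
  < sumR M (fun k => sumR M (fun l => (2 * (x k - x l)) ^ 2))
    * sumR M (fun k => sumR M (fun l => (INR k - INR l) ^ 2)).
Proof.
  intros HM Hkappa Hx.
  apply (cauchy_schwarz_strict_pair M M (fun k l => 2 * (x k - x l))
           (fun k l => INR k - INR l) 0 1 0 2); try lia.
  rewrite !Hx; simpl; lra.
Qed.

Lemma Xc_Zc_sub_Yc_sq M c d fc thD x :
  Xc M c x * Zc M c d fc thD - Yc M c d fc thD x ^ 2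
  = 2 * PI ^ 2 / c ^ 2 * (8 * PI ^ 2 * fc ^ 2 * d ^ 2 * cos thD ^ 2 / c ^ 2)
    * (sumR M (fun k => sumR M (fun l => (2 * (x k - x l)) ^ 2))
       * sumR M (fun k => sumR M (fun l => (INR k - INR l) ^ 2))
       - sumR M (fun k => sumR M (fun l => 2 * (x k - x l) * (INR k - INR l))) ^ 2).
Proof. unfold Xc, Yc, Zc; unfold Rdiv; ring. Qed.

Lemma phased_array_form_pos M c d fc thD kappa (x : nat -> R) :
  (3 <= M)%nat -> 0 < c -> 0 < d -> 0 < fc -> 0 < cos thD ->
  kappa <> 0 -> (forall k, x k = kappa * INR k ^ 2) ->
  0 < Xc M c x /\ 0 < Xc M c x * Zc M c d fc thD - Yc M c d fc thD x ^ 2.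
Proof.
  intros HM Hc Hd Hfc Hcos Hkappa Hx.
  pose proof (gram_defect_quadratic_pos M kappa x HM Hkappa Hx) as Hgram.
  assert (HSB : 0 <= sumR M (fun k => sumR M (fun l => (INR k - INR l) ^ 2)))
    by (apply sumR_nonneg; intros; apply sumR_nonneg; intros; apply pow2_ge_0).
  assert (HPI : 0 < PI ^ 2) by (apply pow_lt, PI_RGT_0).
  assert (HA : 0 < 2 * PI ^ 2 / c ^ 2) by (apply Rdiv_lt_0_compat; [lra|apply pow_lt; lra]).
  assert (HC : 0 < 8 * PI ^ 2 * fc ^ 2 * d ^ 2 * cos thD ^ 2 / c ^ 2).
  { pose proof (pow_lt fc 2 Hfc); pose proof (pow_lt d 2 Hd).
    pose proof (pow_lt (cos thD) 2 Hcos).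
    apply Rdiv_lt_0_compat; [|apply pow_lt; lra].
    repeat (apply Rmult_lt_0_compat; [|assumption]); lra. }
  split.
  - unfold Xc; apply Rmult_lt_0_compat; [exact HA|].
    pose proof (pow2_ge_0 (sumR M (fun k => sumR M (fun l => 2 * (x k - x l) * (INR k - INR l))))).
    nra.
  - rewrite Xc_Zc_sub_Yc_sq.
    apply Rmult_lt_0_compat; [apply Rmult_lt_0_compat|]; lra.
Qed.

Lemma Xc_scale M c s (x x' : nat -> R) :
  (forall k, (k < M)%nat -> x' k = s * x k) -> Xc M c x' = s ^ 2 * Xc M c x.
Proof.
  intros Hx'; unfold Xc.
  rewrite (sumR_ext M _ (fun k => s ^ 2 * sumR M (fun l => (2 * (x k - x l)) ^ 2))).
  - rewrite sumR_scal; ring.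
  - intros k Hk; rewrite <- sumR_scal; apply sumR_ext; intros l Hl.
    rewrite !Hx' by assumption; ring.
Qed.

Lemma Yc_scale M c d fc thD s (x x' : nat -> R) :
  (forall k, (k < M)%nat -> x' k = s * x k) ->
  Yc M c d fc thD x' = s * Yc M c d fc thD x.
Proof.
  intros Hx'; unfold Yc.
  rewrite (sumR_ext M _
    (fun k => s * sumR M (fun l => 2 * (x k - x l) * (INR k - INR l)))).
  - rewrite sumR_scal; ring.
  - intros k Hk; rewrite <- sumR_scal; apply sumR_ext; intros l Hl.
    rewrite !Hx' by assumption; ring.
Qed.

Definition qform (X Y Z u v : R) : R := X * u ^ 2 + 2 * Y * u * v + Z * v ^ 2.

Lemma qform_swap X Y Z u v : qform X Y Z u v = qform Z Y X v u.
Proof. unfold qform; ring. Qed.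

Lemma max_minus_min_ext (P Q : R -> Prop) w :
  (forall x, P x <-> Q x) -> max_minus_min P w -> max_minus_min Q w.
Proof.
  intros HPQ (a & b & Ha & Hb & Hab & Hw).
  exists a, b; repeat split; try apply HPQ; auto; apply Hab, HPQ; assumption.
Qed.

Lemma qform_width X Y Z K r0 t0 :
  0 < Z -> 0 < X * Z - Y ^ 2 -> 0 < K ->
  max_minus_min (fun r => exists t, qform X Y Z (r - r0) (t - t0) = K)
    (2 * sqrt (K * Z / (X * Z - Y ^ 2))).
Proof.
  intros HZ HD HK.
  set (D := X * Z - Y ^ 2) in *.
  set (s := sqrt (K * Z / D)).
  assert (Hs0 : 0 <= s) by apply sqrt_pos.
  assert (Hs2 : s ^ 2 * D = K * Z).
  { unfold s; rewrite <- Rsqr_pow2, Rsqr_sqrt.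
    - field; lra.
    - apply Rlt_le, Rdiv_lt_0_compat; nra. }
  assert (Hsquare : forall u v, Z * qform X Y Z u v = (Z * v + Y * u) ^ 2 + D * u ^ 2)
    by (intros; unfold qform, D; ring).
  assert (Hvertex : forall r, (r - r0) ^ 2 = s ^ 2 ->
            exists t, qform X Y Z (r - r0) (t - t0) = K).
  { intros r Hr; exists (t0 - Y * (r - r0) / Z).
    apply (Rmult_eq_reg_l Z); [|lra].
    rewrite Hsquare, Hr.
    replace (Z * (t0 - Y * (r - r0) / Z - t0) + Y * (r - r0)) with 0 by (field; lra).
    lra. }
  exists (r0 - s), (r0 + s); split; [|split; [|split]].
  - apply Hvertex; ring.
  - apply Hvertex; ring.
  - intros r [t Ht].
    assert ((r - r0) ^ 2 * D <= s ^ 2 * D).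
    { rewrite Hs2, <- Ht, (Rmult_comm _ Z), Hsquare.
      pose proof (pow2_ge_0 (Z * (t - t0) + Y * (r - r0))); lra. }
    assert ((r - r0) ^ 2 <= s ^ 2) by (apply (Rmult_le_reg_r D); assumption).
    split; nra.
  - ring.
Qed.

Lemma sqrt_div_pow2 y a : a <> 0 -> sqrt (y / a ^ 2) = sqrt y / Rabs a.
Proof.
  intros Ha.
  rewrite sqrt_div_alt, <- Rsqr_pow2, sqrt_Rsqr_abs; [reflexivity|].
  rewrite <- Rsqr_pow2; apply Rsqr_pos_lt, Ha.
Qed.

Lemma scaled_ellipse_widths s Xp Yp Zp K r0 t0 :
  s <> 0 -> 0 < Xp -> 0 < Xp * Zp - Yp ^ 2 -> 0 < K ->
  let Q := fun r t => qform (s ^ 2 * Xp) (s * Yp) Zp (r - r0) (t - t0) = K in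
  is_ellipse (s ^ 2 * Xp) (s * Yp) Zp K /\
  max_minus_min (fun r => exists t, Q r t)
    (2 / Rabs s * sqrt (K * Zp / (Xp * Zp - Yp ^ 2))) /\
  max_minus_min (fun t => exists r, Q r t)
    (2 * sqrt (K * Xp / (Xp * Zp - Yp ^ 2))).
Proof.
  intros Hs HXp HDp HK Q.
  assert (Hs2 : 0 < s ^ 2) by (rewrite <- Rsqr_pow2; apply Rsqr_pos_lt, Hs).
  assert (HD : s ^ 2 * Xp * Zp - (s * Yp) ^ 2 = s ^ 2 * (Xp * Zp - Yp ^ 2)) by ring.
  assert (HX : 0 < s ^ 2 * Xp) by (apply Rmult_lt_0_compat; assumption).
  assert (HD0 : 0 < s ^ 2 * Xp * Zp - (s * Yp) ^ 2)
    by (rewrite HD; apply Rmult_lt_0_compat; assumption).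
  assert (HZp : 0 < Zp) by (pose proof (pow2_ge_0 Yp); nra).
  split; [|split].
  - repeat split; assumption.
  - replace (2 / Rabs s * sqrt (K * Zp / (Xp * Zp - Yp ^ 2)))
      with (2 * sqrt (K * Zp / (s ^ 2 * Xp * Zp - (s * Yp) ^ 2))).
    + exact (qform_width _ _ _ K r0 t0 HZp HD0 HK).
    + pose proof (Rabs_pos_lt s Hs).
      transitivity (2 * (sqrt (K * Zp / (Xp * Zp - Yp ^ 2)) / Rabs s)); [|field; lra].
      rewrite HD, <- sqrt_div_pow2 by exact Hs.
      do 2 f_equal; field; lra.
  - apply (max_minus_min_ext
             (fun t => exists r, qform Zp (s * Yp) (s ^ 2 * Xp) (t - t0) (r - r0) = K)).
    + intros t; unfold Q; split; intros [r Hr]; exists r;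
        [rewrite qform_swap in Hr|rewrite <- qform_swap]; exact Hr.
    + replace (K * Xp / (Xp * Zp - Yp ^ 2))
        with (K * (s ^ 2 * Xp) / (Zp * (s ^ 2 * Xp) - (s * Yp) ^ 2)).
      * exact (qform_width Zp (s * Yp) (s ^ 2 * Xp) K t0 r0 HX ltac:(lra) HK).
      * rewrite (Rmult_comm Zp), HD; field; lra.
Qed.

Theorem proposition1 (M : nat) (c fc d RD thD alpha : R) (df : nat -> R) :
  (3 <= M)%nat -> 0 < c -> 0 < fc -> 0 < d -> 0 < RD ->
  - (PI / 2) < thD < PI / 2 -> alpha <> 1 ->
  (forall k : nat, (k < M)%nat ->
     df k = fc * d ^ 2 / (2 * RD ^ 2) * alpha * (INR k) ^ 2) ->
  let X := Xc M c (xi df fc d RD) in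
  let Y := Yc M c d fc thD (xi df fc d RD) in
  let Z := Zc M c d fc thD in
  let Xpa := Xc M c (xi (fun _ => 0) fc d RD) in
  let Ypa := Yc M c d fc thD (xi (fun _ => 0) fc d RD) in
  let Zpa := Zc M c d fc thD in
  let E := fun R th : R =>
    X * (R - RD) ^ 2 + 2 * Y * (R - RD) * (th - thD) + Z * (th - thD) ^ 2
    = (INR M) ^ 2 in
  is_ellipse X Y Z ((INR M) ^ 2) /\
  max_minus_min (fun R => exists th, E R th)
    (2 / Rabs (1 - alpha) *
       sqrt ((INR M) ^ 2 * Zpa / (Xpa * Zpa - Ypa ^ 2))) /\
  max_minus_min (fun th => exists R, E R th)
    (2 * sqrt ((INR M) ^ 2 * Xpa / (Xpa * Zpa - Ypa ^ 2))).
Proof.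
  intros HM Hc Hfc Hd HRD Hth Halpha Hdf X Y Z Xpa Ypa Zpa E.
  set (kappa := d ^ 2 * fc / (2 * RD ^ 2)).
  assert (Hkappa : 0 < kappa).
  { pose proof (pow_lt d 2 Hd); pose proof (pow_lt RD 2 HRD).
    unfold kappa; apply Rdiv_lt_0_compat; nra. }
  assert (Hxi_pa : forall k, xi (fun _ => 0) fc d RD k = - kappa * INR k ^ 2)
    by (intros; unfold xi, kappa; ring).
  assert (Hxi : forall k, (k < M)%nat ->
            xi df fc d RD k = (1 - alpha) * xi (fun _ => 0) fc d RD k).
  { intros k Hk; unfold xi; rewrite Hdf by exact Hk; field; lra. }
  destruct (phased_array_form_pos M c d fc thD (- kappa) (xi (fun _ => 0) fc d RD)
              HM Hc Hd Hfc (cos_gt_0 thD (proj1 Hth) (proj2 Hth))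
              ltac:(lra) Hxi_pa) as [HXpa HDpa].
  assert (HX : X = (1 - alpha) ^ 2 * Xpa) by exact (Xc_scale M c _ _ _ Hxi).
  assert (HY : Y = (1 - alpha) * Ypa) by exact (Yc_scale M c d fc thD _ _ _ Hxi).
  unfold E; rewrite HX, HY.
  exact (scaled_ellipse_widths (1 - alpha) Xpa Ypa Zpa (INR M ^ 2) RD thD
           ltac:(lra) HXpa HDpa ltac:(apply pow_lt, lt_0_INR; lia)).
Qed.
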